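(* Let $\mathscr H$ be a complex Hilbert space and $\mathbf{X},\mathbf{Y},\mathbf{Z},\mathbf{W}\in\mathbb{B}(\mathscr H)^d$. Then $$w_e\left(\begin{bmatrix}\mathbf{X}&\mathbf{Y}\\\mathbf{Z}&\mathbf{W}\end{bmatrix}\right)\le w\left(\begin{bmatrix}w_e(\mathbf{X})&\|\mathbf{Y}\|\\\|\mathbf{Z}\|&w_e(\mathbf{W})\end{bmatrix}\right),$$ where on the right $w$ is the numerical radius of a $2\times2$ complex matrix.
   Context: $\mathbb{B}(\mathscr H)$ denotes the bounded linear operators on $\mathscr H$. For $\mathbf{T}=(T_1,\dots,T_d)$: $w_e(\mathbf{T})=\sup\{(\sum_{k}|\langle T_kx,x\rangle|^2)^{1/2}: \|x\|=1\}$ and $\|\mathbf{T}\|=\sup\{(\sum_k\|T_kx\|^2)^{1/2}: \|x\|=1\}$. For a matrix $A$, $w(A)=\sup\{|\langle Av,v\rangle|:\|v\|=1\}$. For $d$-tuples $\mathbf{X},\mathbf{Y},\mathbf{Z},\mathbf{W}$, $\begin{bmatrix}\mathbf{X}&\mathbf{Y}\\\mathbf{Z}&\mathbf{W}\end{bmatrix}$ denotes the $d$-tuple $\left(\begin{bmatrix}X_k&Y_k\\Z_k&W_k\end{bmatrix}\right)_{k=1}^d$ of operators on $\mathscr H\oplus\mathscr H$. *)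

From mathcomp Require Import all_boot all_order all_algebra.
From mathcomp Require Import boolp classical_sets reals.
From mathcomp.real_closed Require Export complex.
Set Implicit Arguments. Unset Strict Implicit. Unset Printing Implicit Defensive.
Import GRing.Theory Num.Theory.
Local Open Scope ring_scope.
Local Open Scope classical_set_scope.

Definition cmod2 (R : rcfType) (z : R[i]) : R := complex.Re z ^+ 2 + complex.Im z ^+ 2.
Definition cmod (R : rcfType) (z : R[i]) : R := Num.sqrt (cmod2 z).
Definition cconj (R : rcfType) (z : R[i]) : R[i] := Complex (complex.Re z) (- complex.Im z).

Record hilbert (R : realType) (H : lmodType R[i]) := Hilbert {
  ip : H -> H -> R[i];
  ip_linear : forall (a : R[i]) (x y z : H), ip (a *: x + y) z = a * ip x z + ip y z;
  ip_conj : forall x y : H, ip y x = cconj (ip x y);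
  ip_pos : forall x : H, 0 <= complex.Re (ip x x);
  ip_def : forall x : H, ip x x = 0 -> x = 0;
  ip_complete : forall u : nat -> H,
    (forall e : R, 0 < e -> exists N, forall m n, (N <= m)%N -> (N <= n)%N ->
        Num.sqrt (complex.Re (ip (u m - u n) (u m - u n))) < e) ->
    exists l : H, forall e : R, 0 < e -> exists N, forall n, (N <= n)%N ->
        Num.sqrt (complex.Re (ip (u n - l) (u n - l))) < e
}.

Section Ops.
Variables (R : realType) (H : lmodType R[i]) (hs : hilbert H).
Local Notation ip := (ip hs).

Definition hnorm (x : H) : R := Num.sqrt (complex.Re (ip x x)).

Definition bounded_op (T : H -> H) : Prop :=
  (forall (a : R[i]) (x y : H), T (a *: x + y) = a *: T x + T y) /\
  exists M : R, forall x, hnorm (T x) <= M * hnorm x.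

Definition wE (d : nat) (T : 'I_d -> H -> H) : R :=
  sup [set r : R | exists x : H, hnorm x = 1 /\
         r = Num.sqrt (\sum_(k < d) cmod2 (ip (T k x) x))].

Definition jnorm (d : nat) (T : 'I_d -> H -> H) : R :=
  sup [set r : R | exists x : H, hnorm x = 1 /\
         r = Num.sqrt (\sum_(k < d) hnorm (T k x) ^+ 2)].

Definition ip2 (u v : H * H) : R[i] := ip u.1 v.1 + ip u.2 v.2.
Definition hnorm2 (u : H * H) : R := Num.sqrt (complex.Re (ip2 u u)).

Definition block_op (X Y Z W : H -> H) (u : H * H) : H * H :=
  (X u.1 + Y u.2, Z u.1 + W u.2).

Definition wE2 (d : nat) (T : 'I_d -> H * H -> H * H) : R :=
  sup [set r : R | exists u : H * H, hnorm2 u = 1 /\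
         r = Num.sqrt (\sum_(k < d) cmod2 (ip2 (T k u) u))].
End Ops.

(* numerical radius of a 2x2 complex matrix: sup { |<A v, v>| : ||v|| = 1 },
   with <A v, v> = sum_{i,j} A_ij v_j conj(v_i) *)
Definition mx_numrad (R : realType) (A : 'M[R[i]]_2) : R :=
  sup [set r : R | exists v : 'cV[R[i]]_2,
         \sum_(i < 2) cmod2 (v i ord0) = 1 /\
         r = cmod (\sum_(i < 2) \sum_(j < 2) A i j * v j ord0 * cconj (v i ord0))].

Definition mx2 (R : realType) (a b c e : R) : 'M[R[i]]_2 :=
  \matrix_(i < 2, j < 2)
    (if (i == 0 :> nat) then (if (j == 0 :> nat) then a%:C else b%:C)
     else (if (j == 0 :> nat) then c%:C else e%:C))%C.

From Pilot Require Import Defs.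
From mathcomp Require Import all_boot all_order all_algebra.
From mathcomp Require Import boolp classical_sets reals.
From mathcomp.real_closed Require Import complex.
From mathcomp Require Import ring lra.

(* Write a unit vector of H (+) H as u = (x1, x2) and put a = ||x1||,
   b = ||x2||, so a^2 + b^2 = 1.  The k-th coordinate of <T u, u> splits as
   <X_k x1, x1> + <Y_k x2, x1> + <Z_k x1, x2> + <W_k x2, x2>, and Minkowski's
   inequality in C^d bounds the Euclidean norm of this sum of four vectors by
   w_e(X) a^2 + ||Y|| a b + ||Z|| a b + w_e(W) b^2; the cross terms are handled
   by Cauchy-Schwarz, |<Y_k x2, x1>| <= a ||Y_k x2||.  The last expression is
   <A v, v> for the real unit vector v = (a, b) and the 2x2 matrix A of the
   right-hand side, hence at most w(A). *)

Set Implicit Arguments. Unset Strict Implicit. Unset Printing Implicit Defensive.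
Import Order.TTheory GRing.Theory Num.Theory ComplexField.Normc.
Local Open Scope ring_scope.
Local Open Scope complex_scope.

Section ComplexModulus.
Variable R : rcfType.
Implicit Types z w : R[i].

Lemma cmod2E z : cmod2 z = normc z ^+ 2.
Proof. by case: z => a b; rewrite /cmod2 /= sqr_sqrtr // addr_ge0 // sqr_ge0. Qed.

Lemma cmodE z : cmod z = normc z.
Proof. by case: z. Qed.

Lemma cconjE z : cconj z = conjc z.
Proof. by case: z. Qed.

Lemma normc_ge0 z : 0 <= normc z.
Proof. by case: z => a b; rewrite /= sqrtr_ge0. Qed.

Lemma normc_conj z : normc (conjc z) = normc z.
Proof. by case: z => a b /=; rewrite sqrrN. Qed.

Lemma normc_real (r : R) : normc r%:C = `|r|.
Proof. by rewrite /= expr0n /= addr0 sqrtr_sqr. Qed.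

Lemma ReD z w : complex.Re (z + w) = complex.Re z + complex.Re w.
Proof. by case: z; case: w. Qed.

Lemma Re_realM (r : R) z : complex.Re (r%:C * z) = r * complex.Re z.
Proof. by case: z => a b /=; ring. Qed.

Lemma Re_conj z : complex.Re (conjc z) = complex.Re z.
Proof. by case: z. Qed.

Lemma conjc_mulr z : conjc z * z = (normc z ^+ 2)%:C.
Proof.
case: z => a b; rewrite /= sqr_sqrtr ?addr_ge0 ?sqr_ge0 //.
by congr Complex; ring.
Qed.

Lemma normc_sum (I : Type) (r : seq I) (P : pred I) (F : I -> R[i]) :
  normc (\sum_(i <- r | P i) F i) <= \sum_(i <- r | P i) normc (F i).
Proof.
elim/big_rec2: _ => [|i y1 y2 _ IH]; first by rewrite normc0.
by apply: le_trans (le_normcD _ _) _; rewrite lerD2l.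
Qed.

End ComplexModulus.

Section SumsOfSquares.
Variable R : rcfType.

Lemma sqr_le_mul_of_quadratic_ge0 (P S Q : R) :
  (forall t, 0 <= P + 2 * t * S + t ^+ 2 * Q) -> 0 <= Q -> S ^+ 2 <= P * Q.
Proof.
move=> quad_ge0 Q_ge0; have := quad_ge0 0.
rewrite !(mul0r, mulr0, expr0n, addr0) /= => P_ge0.
have [Q0|Q_neq0] := eqVneq Q 0.
  rewrite Q0 mulr0; have [->|S_neq0] := eqVneq S 0; first by rewrite expr0n.
  have := quad_ge0 (- (P + 1) / (2 * S)); rewrite Q0 mulr0 addr0.
  have -> : 2 * (- (P + 1) / (2 * S)) * S = - (P + 1) by field; rewrite S_neq0.
  lra.
have Q_gt0 : 0 < Q by rewrite lt_def Q_neq0 Q_ge0.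
have := quad_ge0 (- S / Q).
have -> : P + 2 * (- S / Q) * S + (- S / Q) ^+ 2 * Q = P - S ^+ 2 / Q by field.
by rewrite subr_ge0 ler_pdivrMr.
Qed.

Lemma sum_mul_sqr_le (I : finType) (u v : I -> R) :
  (\sum_i u i * v i) ^+ 2 <= (\sum_i u i ^+ 2) * (\sum_i v i ^+ 2).
Proof.
rewrite mulrC; apply: sqr_le_mul_of_quadratic_ge0 => [t|]; last first.
  by apply: sumr_ge0 => i _; rewrite sqr_ge0.
have -> : \sum_i v i ^+ 2 + 2 * t * (\sum_i u i * v i) + t ^+ 2 * \sum_i u i ^+ 2
    = \sum_i (v i + t * u i) ^+ 2.
  by rewrite !mulr_sumr -!big_split /=; apply: eq_bigr => i _; ring.
by apply: sumr_ge0 => i _; rewrite sqr_ge0.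
Qed.

Lemma sqrt_sum_sqrD_le (I : finType) (u v : I -> R) :
  Num.sqrt (\sum_i (u i + v i) ^+ 2) <=
  Num.sqrt (\sum_i u i ^+ 2) + Num.sqrt (\sum_i v i ^+ 2).
Proof.
set U := \sum_i u i ^+ 2; set V := \sum_i v i ^+ 2; set S := \sum_i u i * v i.
have U_ge0 : 0 <= U by apply: sumr_ge0 => i _; rewrite sqr_ge0.
have V_ge0 : 0 <= V by apply: sumr_ge0 => i _; rewrite sqr_ge0.
have -> : \sum_i (u i + v i) ^+ 2 = U + 2 * S + V.
  by rewrite /U /V /S mulr_sumr -!big_split /=; apply: eq_bigr => i _; ring.
have S_le : S <= Num.sqrt U * Num.sqrt V.
  rewrite -sqrtrM // (le_trans (ler_norm S)) // -sqrtr_sqr.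
  by rewrite ler_wsqrtr // sum_mul_sqr_le.
have sqrtUV_ge0 : 0 <= Num.sqrt U + Num.sqrt V by rewrite addr_ge0 ?sqrtr_ge0.
rewrite -[X in _ <= X]ger0_norm // -sqrtr_sqr ler_sqrt ?sqr_ge0 //.
rewrite sqrrD !sqr_sqrtr // mulr_natl; lra.
Qed.

End SumsOfSquares.

Lemma sqrt_sum_cmod2D_le (R : rcfType) (I : finType) (f g : I -> R[i]) :
  Num.sqrt (\sum_k cmod2 (f k + g k)) <=
  Num.sqrt (\sum_k cmod2 (f k)) + Num.sqrt (\sum_k cmod2 (g k)).
Proof.
have cmod2_sum (h : I -> R[i]) : \sum_k cmod2 (h k) = \sum_k normc (h k) ^+ 2.
  by apply: eq_bigr => k _; rewrite cmod2E.
rewrite !cmod2_sum; apply: le_trans (sqrt_sum_sqrD_le _ _).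
rewrite ler_sqrt ?sumr_ge0 // => [|k _]; last by rewrite sqr_ge0.
rewrite ler_sum // => k _.
by rewrite lerXn2r ?nnegrE ?addr_ge0 ?le_normcD //; apply: normc_ge0.
Qed.

Section InnerProduct.
Variables (R : realType) (H : lmodType R[i]) (hs : hilbert H).
Local Notation ip := (ip hs).
Local Notation hnorm := (hnorm hs).

Lemma ip0l z : ip 0 z = 0.
Proof.
have := ip_linear hs 1 0 0 z; rewrite scale1r addr0 mul1r => /eqP.
by rewrite eq_sym -subr_eq0 addrK => /eqP.
Qed.

Lemma ipDl x y z : ip (x + y) z = ip x z + ip y z.
Proof. by have := ip_linear hs 1 x y z; rewrite scale1r mul1r. Qed.

Lemma ipZl a x z : ip (a *: x) z = a * ip x z.
Proof. by have := ip_linear hs a x 0 z; rewrite !addr0 ip0l addr0. Qed.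

Lemma ipDr x y z : ip x (y + z) = ip x y + ip x z.
Proof. by rewrite ip_conj ipDl !cconjE rmorphD /= -!cconjE -!ip_conj. Qed.

Lemma ipZr a x z : ip x (a *: z) = conjc a * ip x z.
Proof. by rewrite ip_conj ipZl cconjE rmorphM /= -[conjc (ip z x)]cconjE -ip_conj. Qed.

Lemma Re_ipC x y : complex.Re (ip x y) = complex.Re (ip y x).
Proof. by rewrite ip_conj cconjE Re_conj. Qed.

Lemma hnorm_ge0 x : 0 <= hnorm x.
Proof. exact: sqrtr_ge0. Qed.

Lemma hnorm_sqr x : hnorm x ^+ 2 = complex.Re (ip x x).
Proof. by rewrite sqr_sqrtr // ip_pos. Qed.

Lemma hnorm_eq0 x : hnorm x = 0 -> x = 0.
Proof.
move=> /eqP; rewrite sqrtr_eq0 => Re_le0; apply: (ip_def (h := hs)).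
have Re0 : complex.Re (ip x x) = 0 by apply/eqP; rewrite eq_le Re_le0 ip_pos.
move: (ip_conj hs x x) Re0; rewrite /cconj.
by case: (ip x x) => a b /= [b_eqN] ->; congr Complex; lra.
Qed.

Lemma hnormZ (a : R) x : 0 <= a -> hnorm (a%:C *: x) = a * hnorm x.
Proof.
move=> a_ge0; rewrite /Defs.hnorm ipZl ipZr conjc_real mulrA -rmorphM Re_realM.
by rewrite -[a * a]expr2 sqrtrM ?sqr_ge0 // sqrtr_sqr ger0_norm.
Qed.

(* Completing the square in the real part of <y + t x, y + t x> >= 0. *)
Lemma Re_ip_sqr_le x y :
  complex.Re (ip y x) ^+ 2 <= complex.Re (ip y y) * complex.Re (ip x x).
Proof.
apply: sqr_le_mul_of_quadratic_ge0 => [t|]; last exact: ip_pos.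
have := ip_pos hs (y + t%:C *: x).
rewrite ipDl !ipDr !ipZl !ipZr conjc_real !ReD !Re_realM (Re_ipC x y).
move=> ?; lra.
Qed.

(* Rotating x by the phase of <x, y> makes that inner product real. *)
Lemma cmod2_ip_le x y : cmod2 (ip x y) <= hnorm x ^+ 2 * hnorm y ^+ 2.
Proof.
rewrite cmod2E !hnorm_sqr; set c := ip x y; set n := normc c ^+ 2.
have n_ge0 : 0 <= n by rewrite sqr_ge0.
have := Re_ip_sqr_le y (conjc c *: x).
rewrite !ipZl ipZr conjcK mulrA conjc_mulr -/c -/n Re_realM /=.
have [->|n_neq0] := eqVneq n 0; first by rewrite mulr_ge0 ?ip_pos.
have n_gt0 : 0 < n by rewrite lt_def n_neq0.
move=> le_n; rewrite -(ler_pM2l n_gt0); nra.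
Qed.

End InnerProduct.

Section OperatorTuples.
Variables (R : realType) (H : lmodType R[i]) (hs : hilbert H).
Local Notation ip := (ip hs).
Local Notation hnorm := (hnorm hs).

Lemma bounded_op0 T : bounded_op hs T -> T 0 = 0.
Proof.
case=> T_lin _; have := T_lin 1 0 0; rewrite scale1r addr0 => /eqP.
by rewrite eq_sym -subr_eq0 scale1r addrK => /eqP.
Qed.

Lemma bounded_opZ T a x : bounded_op hs T -> T (a *: x) = a *: T x.
Proof. by move=> T_bdd; have := T_bdd.1 a x 0; rewrite (bounded_op0 T_bdd) !addr0. Qed.

Definition sup_sphere (f : H -> R) : R :=
  sup [set r : R | exists x : H, hnorm x = 1 /\ r = f x].

Lemma le_sup_sphere_scale (f : H -> R) (n : nat) x : (0 < n)%N ->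
  has_ubound [set r : R | exists y : H, hnorm y = 1 /\ r = f y] ->
  (forall (a : R) y, 0 <= a -> f (a%:C *: y) = a ^+ n * f y) ->
  f x <= sup_sphere f * hnorm x ^+ n.
Proof.
move=> n_gt0 f_ub f_hom; have [x0|x_neq0] := eqVneq (hnorm x) 0.
  have := f_hom 0 0 (lexx 0); rewrite scaler0 expr0n gtn_eqF // mul0r.
  by rewrite x0 (hnorm_eq0 x0) expr0n gtn_eqF // mulr0 => ->.
have x_gt0 : 0 < hnorm x by rewrite lt_def x_neq0 hnorm_ge0.
have [e e_unit x_eq] : exists2 e, hnorm e = 1 & x = (hnorm x)%:C *: e.
  exists ((hnorm x)^-1%:C *: x); first by rewrite hnormZ ?invr_ge0 ?hnorm_ge0 // mulVf.
  by rewrite scalerA -rmorphM divff // scale1r.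
rewrite {1}x_eq f_hom ?hnorm_ge0 // mulrC ler_wpM2r ?exprn_ge0 ?hnorm_ge0 //.
by apply: ub_le_sup => //; exists e.
Qed.

Variable d : nat.
Implicit Types T : 'I_d -> H -> H.

Lemma wE_has_ubound T : (forall k, bounded_op hs (T k)) ->
  has_ubound [set r : R | exists x : H, hnorm x = 1 /\
         r = Num.sqrt (\sum_(k < d) cmod2 (ip (T k x) x))].
Proof.
move=> T_bdd; have [M M_bound] := boolp.choice (fun k => (T_bdd k).2).
exists (Num.sqrt (\sum_(k < d) M k ^+ 2)) => _ [x [x_unit ->]].
rewrite ler_sqrt ?sumr_ge0 // => [|k _]; last by rewrite sqr_ge0.
apply: ler_sum => k _; apply: le_trans (cmod2_ip_le _ _ _) _.
have := M_bound k x; rewrite x_unit expr1n !mulr1 => TM.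
by rewrite lerXn2r ?nnegrE ?hnorm_ge0 // (le_trans (hnorm_ge0 _ _) TM).
Qed.

Lemma jnorm_has_ubound T : (forall k, bounded_op hs (T k)) ->
  has_ubound [set r : R | exists x : H, hnorm x = 1 /\
         r = Num.sqrt (\sum_(k < d) hnorm (T k x) ^+ 2)].
Proof.
move=> T_bdd; have [M M_bound] := boolp.choice (fun k => (T_bdd k).2).
exists (Num.sqrt (\sum_(k < d) M k ^+ 2)) => _ [x [x_unit ->]].
rewrite ler_sqrt ?sumr_ge0 // => [|k _]; last by rewrite sqr_ge0.
apply: ler_sum => k _; have := M_bound k x; rewrite x_unit mulr1 => TM.
by rewrite lerXn2r ?nnegrE ?hnorm_ge0 // (le_trans (hnorm_ge0 _ _) TM).
Qed.

Lemma sqrt_sum_cmod2_ip_le_wE T x : (forall k, bounded_op hs (T k)) ->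
  Num.sqrt (\sum_(k < d) cmod2 (ip (T k x) x)) <= wE hs T * hnorm x ^+ 2.
Proof.
move=> T_bdd; apply: (le_sup_sphere_scale (f := fun x =>
  Num.sqrt (\sum_(k < d) cmod2 (ip (T k x) x)))) => //; first exact: wE_has_ubound.
move=> a y a_ge0; rewrite -[a ^+ 2]ger0_norm ?sqr_ge0 // -sqrtr_sqr -sqrtrM ?sqr_ge0 //.
congr Num.sqrt; rewrite mulr_sumr; apply: eq_bigr => k _.
rewrite bounded_opZ // ipZl ipZr conjc_real mulrA -rmorphM !cmod2E normcM.
by rewrite normc_real ger0_norm ?mulr_ge0 //; ring.
Qed.

Lemma sqrt_sum_hnorm_le_jnorm T x : (forall k, bounded_op hs (T k)) ->
  Num.sqrt (\sum_(k < d) hnorm (T k x) ^+ 2) <= jnorm hs T * hnorm x.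
Proof.
move=> T_bdd; rewrite -[hnorm x]expr1.
apply: (le_sup_sphere_scale (f := fun x =>
  Num.sqrt (\sum_(k < d) hnorm (T k x) ^+ 2))) => //; first exact: jnorm_has_ubound.
move=> a y a_ge0; rewrite expr1 -[in RHS](ger0_norm a_ge0) -sqrtr_sqr -sqrtrM ?sqr_ge0 //.
congr Num.sqrt; rewrite mulr_sumr; apply: eq_bigr => k _.
by rewrite bounded_opZ // hnormZ // exprMn.
Qed.

Lemma sqrt_sum_cmod2_ip_le_jnorm T x y : (forall k, bounded_op hs (T k)) ->
  Num.sqrt (\sum_(k < d) cmod2 (ip (T k y) x)) <= hnorm x * (jnorm hs T * hnorm y).
Proof.
move=> T_bdd; apply: le_trans (_ : _ <=
  Num.sqrt (hnorm x ^+ 2 * \sum_(k < d) hnorm (T k y) ^+ 2)) _.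
  rewrite ler_sqrt; last by rewrite mulr_ge0 ?sqr_ge0 ?sumr_ge0 // => k _; rewrite sqr_ge0.
  by rewrite mulr_sumr ler_sum // => k _; rewrite mulrC cmod2_ip_le.
rewrite sqrtrM ?sqr_ge0 // sqrtr_sqr ger0_norm ?hnorm_ge0 //.
by rewrite ler_wpM2l ?hnorm_ge0 ?sqrt_sum_hnorm_le_jnorm.
Qed.

End OperatorTuples.

Section BlockOperator.
Variables (R : realType) (H : lmodType R[i]) (hs : hilbert H).
Local Notation ip := (ip hs).
Local Notation hnorm := (hnorm hs).

Lemma ip2_block_op X Y Z W x1 x2 :
  ip2 hs (block_op X Y Z W (x1, x2)) (x1, x2) =
  (ip (X x1) x1 + ip (Y x2) x1) + (ip (Z x1) x2 + ip (W x2) x2).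
Proof. by rewrite /ip2 /block_op /= !ipDl. Qed.

Lemma hnorm2_sqr x1 x2 : hnorm2 hs (x1, x2) ^+ 2 = hnorm x1 ^+ 2 + hnorm x2 ^+ 2.
Proof. by rewrite !hnorm_sqr -ReD sqr_sqrtr // ReD addr_ge0 ?ip_pos. Qed.

Variables (d : nat) (X Y Z W : 'I_d -> H -> H).
Hypotheses (hX : forall k, bounded_op hs (X k)) (hY : forall k, bounded_op hs (Y k))
  (hZ : forall k, bounded_op hs (Z k)) (hW : forall k, bounded_op hs (W k)).

Lemma sqrt_sum_block_form_le x1 x2 :
  Num.sqrt (\sum_(k < d)
    cmod2 (ip2 hs (block_op (X k) (Y k) (Z k) (W k) (x1, x2)) (x1, x2))) <=
  wE hs X * hnorm x1 ^+ 2 + jnorm hs Y * hnorm x2 * hnorm x1 +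
  jnorm hs Z * hnorm x1 * hnorm x2 + wE hs W * hnorm x2 ^+ 2.
Proof.
under eq_bigr do rewrite ip2_block_op.
apply: le_trans (sqrt_sum_cmod2D_le _ _) _.
apply: le_trans (lerD (sqrt_sum_cmod2D_le _ _) (sqrt_sum_cmod2D_le _ _)) _.
have := lerD
  (lerD (sqrt_sum_cmod2_ip_le_wE x1 hX) (sqrt_sum_cmod2_ip_le_jnorm x1 x2 hY))
  (lerD (sqrt_sum_cmod2_ip_le_jnorm x2 x1 hZ) (sqrt_sum_cmod2_ip_le_wE x2 hW)).
move=> le_bounds; lra.
Qed.

End BlockOperator.

Section NumericalRadius.
Variable R : realType.

Lemma mx_numrad_ge (A : 'M[R[i]]_2) (v : 'cV[R[i]]_2) :
  \sum_(i < 2) cmod2 (v i ord0) = 1 ->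
  cmod (\sum_(i < 2) \sum_(j < 2) A i j * v j ord0 * cconj (v i ord0)) <=
  mx_numrad A.
Proof.
move=> v_unit; apply: ub_le_sup; last by exists v.
exists (\sum_(i < 2) \sum_(j < 2) normc (A i j)) => _ [w [w_unit ->]].
have w_le1 i : normc (w i ord0) <= 1.
  have : cmod2 (w i ord0) <= 1.
    rewrite -w_unit (bigD1 i) //= lerDl sumr_ge0 // => j _.
    by rewrite cmod2E sqr_ge0.
  by rewrite cmod2E expr2 => ?; have := normc_ge0 (w i ord0); nra.
rewrite cmodE; apply: le_trans (normc_sum _ _ _) _.
apply: ler_sum => i _; apply: le_trans (normc_sum _ _ _) _.
apply: ler_sum => j _; rewrite !normcM cconjE normc_conj.
apply: le_trans (_ : _ <= normc (A i j) * normc (w j ord0)) _.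
  by rewrite ler_piMr ?mulr_ge0 ?normc_ge0.
by rewrite ler_piMr ?normc_ge0.
Qed.

Lemma mx2_form (wx ny nz ww a b : R) :
  let v : 'cV[R[i]]_2 := \col_i (if (i == 0 :> nat) then a%:C else b%:C) in
  \sum_(i < 2) \sum_(j < 2) mx2 wx ny nz ww i j * v j ord0 * cconj (v i ord0) =
  (wx * a ^+ 2 + ny * b * a + nz * a * b + ww * b ^+ 2)%:C.
Proof.
move=> v; rewrite !big_ord_recr !big_ord0 /= !mxE /= !cconjE !conjc_real.
by rewrite !rmorphD !rmorphM /=; ring.
Qed.

Lemma mx2_numrad_ge (wx ny nz ww a b : R) : a ^+ 2 + b ^+ 2 = 1 ->
  `|wx * a ^+ 2 + ny * b * a + nz * a * b + ww * b ^+ 2| <=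
  mx_numrad (mx2 wx ny nz ww).
Proof.
move=> ab_unit; rewrite -normc_real -cmodE -mx2_form; apply: mx_numrad_ge.
by rewrite !big_ord_recr big_ord0 /= !mxE /= /cmod2 /= expr0n /= !addr0 add0r.
Qed.

End NumericalRadius.

Theorem theorem3p2 (R : realType) (H : lmodType R[i]) (hs : hilbert H) (d : nat)
  (X Y Z W : 'I_d -> H -> H)
  (hX : forall k, bounded_op hs (X k)) (hY : forall k, bounded_op hs (Y k))
  (hZ : forall k, bounded_op hs (Z k)) (hW : forall k, bounded_op hs (W k)) :
  wE2 hs (fun k => block_op (X k) (Y k) (Z k) (W k)) <=
  mx_numrad (mx2 (wE hs X) (jnorm hs Y) (jnorm hs Z) (wE hs W)).
Proof.
(* On the zero space the unit sphere is empty and the supremum is the junk value 0. *)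
have [[u0 u0_unit]|no_unit] := pselect (exists u : H * H, hnorm2 hs u = 1); last first.
  rewrite /wE2 sup_out => [|[[_ [u [u_unit _]]] _]]; last by apply: no_unit; exists u.
  apply: le_trans (mx2_numrad_ge _ _ _ _ (a := 1) (b := 0) _); first exact: normr_ge0.
  by rewrite expr1n expr0n addr0.
apply: ge_sup; first by exists (Num.sqrt (\sum_(k < d)
  cmod2 (ip2 hs (block_op (X k) (Y k) (Z k) (W k) u0) u0))), u0.
move=> _ [[x1 x2] [u_unit ->]].
have ab_unit : hnorm hs x1 ^+ 2 + hnorm hs x2 ^+ 2 = 1.
  by rewrite -hnorm2_sqr u_unit expr1n.
apply: le_trans (sqrt_sum_block_form_le hX hY hZ hW x1 x2) _.
apply: le_trans (mx2_numrad_ge _ _ _ _ ab_unit); exact: ler_norm.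
Qed.
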